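(* Let $G$ be a connected graph of order $n$ without isolated vertices and with maximum degree $\Delta(G)=n-1$. Then $\chi_{dom}(G)=\chi_d^t(G)=\chi(G)$.
   Context: All graphs are finite and simple. A proper coloring of $G$ partitions $V(G)$ into independent color classes; $\chi(G)$ is the chromatic number. A dominated coloring (dom-coloring) of $G$ is a proper coloring in which every color class is dominated by at least one vertex, i.e. for each color class $C$ there is a vertex of $G$ adjacent to every vertex of $C$; $\chi_{dom}(G)$ is the minimum number of colors in a dominated coloring. For $G$ without isolated vertices, a total dominator coloring is a proper coloring in which every vertex is adjacent to every vertex of some color class other than its own; $\chi_d^t(G)$ is the minimum number of colors in such a coloring. *)

From mathcomp Require Import all_boot.
Set Implicit Arguments. Unset Strict Implicit. Unset Printing Implicit Defensive.

Section Graphs.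
Variables (T : finType) (e : rel T).

Definition simple_graph : Prop := irreflexive e /\ symmetric e.

Definition no_isolated : Prop := forall v : T, exists u : T, e v u.

Definition connected_graph : Prop := forall x y : T, connect e x y.

Definition neighbourhood (v : T) : {set T} := [set u | e v u].

Definition deg (v : T) : nat := #|neighbourhood v|.

(* maximum degree of G (0 for the empty graph) *)
Definition max_degree : nat := \max_(v : T) deg v.

Definition independent (C : {set T}) : bool :=
  [forall x in C, forall y in C, ~~ e x y].

(* A proper coloring: a partition of V(G) into (nonempty) independent
   color classes; the number of colors is #|P|. *)
Definition proper_coloring (P : {set {set T}}) : bool :=
  partition P [set: T] && [forall C in P, independent C].

Definition dominates (v : T) (C : {set T}) : bool := [forall x in C, e v x].

Definition dom_coloring (P : {set {set T}}) : bool :=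
  proper_coloring P && [forall C in P, exists v, dominates v C].

Definition td_coloring (P : {set {set T}}) : bool :=
  proper_coloring P &&
  [forall v, exists C in P, (C != pblock P v) && dominates v C].

(* minimum number of colors; the default #|T| is attained by the partition
   into singletons whenever any such coloring exists at all. *)
Definition chromatic_number : nat :=
  \big[minn/#|T|]_(P : {set {set T}} | proper_coloring P) #|P|.
Definition chi_dom : nat :=
  \big[minn/#|T|]_(P : {set {set T}} | dom_coloring P) #|P|.
Definition chi_td : nat :=
  \big[minn/#|T|]_(P : {set {set T}} | td_coloring P) #|P|.

End Graphs.

(* A vertex of degree n - 1 is adjacent to every other vertex, so in every
   proper coloring it forms a singleton color class {w}.  Then w dominates
   every other class, any neighbour of w dominates {w}, every vertex v <> w
   sees the class {w} other than its own, and w sees the whole class of any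
   of its neighbours.  Hence every proper coloring is both dominated and total
   dominator, and the three minima range over the same colorings. *)
From mathcomp Require Import all_boot.
Set Implicit Arguments. Unset Strict Implicit. Unset Printing Implicit Defensive.

Section UniversalVertex.
Variables (T : finType) (e : rel T).
Hypotheses (e_irr : irreflexive e) (e_sym : symmetric e).

Definition universal (w : T) : Prop := forall u, u != w -> e w u.

Lemma neighbourhood_subset_setC1 (v : T) : neighbourhood e v \subset [set~ v].
Proof.
by apply/subsetP => u; rewrite !inE; apply: contraTneq => ->; rewrite e_irr.
Qed.

Lemma max_degree_universal (x : T) :
  max_degree e = #|T| - 1 -> exists w, universal w.
Proof.
move=> maxdeg; have T_gt0 : 0 < #|T| by apply/card_gt0P; exists x.
have [w max_w] := eq_bigmax (deg e) T_gt0.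
have /eqP N_w : neighbourhood e w == [set~ w].
  rewrite eqEcard neighbourhood_subset_setC1 cardsC1 -subn1.
  by rewrite -/(deg e w) -max_w -maxdeg /= leqnn.
by exists w => u uw; have := in_setC1 u w; rewrite uw -N_w inE.
Qed.

Lemma universal_dominates (w : T) (C : {set T}) :
  universal w -> w \notin C -> dominates e w C.
Proof.
move=> wU wC; apply/forallP => u; apply/implyP => uC.
by apply: wU; apply: contraNneq wC => <-.
Qed.

Lemma dominates_set1 (v w : T) : dominates e v [set w] = e v w.
Proof.
apply/forallP/idP => [/(_ w) | evw u]; first by rewrite set11.
by apply/implyP; rewrite inE => /eqP->.
Qed.

Variable P : {set {set T}}.
Hypothesis P_proper : proper_coloring e P.

Lemma proper_coloring_trivI : trivIset P.
Proof. by case/andP: P_proper => /and3P[]. Qed.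

Lemma proper_coloring_cover (x : T) : x \in cover P.
Proof. by case/andP: P_proper => /and3P[/eqP-> _ _] _; rewrite inE. Qed.

Lemma proper_coloring_class_nonempty (C : {set T}) : C \in P -> exists x, x \in C.
Proof.
case/andP: P_proper => /and3P[_ _ P0] _ CP.
have [C0 | [x xC]] := set_0Vmem C; last by exists x.
by rewrite -C0 CP in P0.
Qed.

Lemma proper_coloring_pblock_indep (x y : T) : y \in pblock P x -> ~~ e x y.
Proof.
move=> y_x; case/andP: P_proper => _ /forallP/(_ (pblock P x)).
rewrite pblock_mem ?proper_coloring_cover //= => /forallP/(_ x).
by rewrite mem_pblock proper_coloring_cover => /forallP/(_ y); rewrite y_x.
Qed.

Lemma universal_pblock (w : T) : universal w -> pblock P w = [set w].
Proof.
move=> wU; apply/setP => u; rewrite inE.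
apply/idP/eqP => [u_w | ->]; last by rewrite mem_pblock proper_coloring_cover.
by apply: contraTeq (proper_coloring_pblock_indep u_w) => uw; rewrite negbK wU.
Qed.

Hypothesis e_no_isolated : no_isolated e.

Lemma universal_dom_class (w : T) (C : {set T}) :
  universal w -> C \in P -> exists v, dominates e v C.
Proof.
move=> wU CP; have [wC | wC] := boolP (w \in C); last first.
  by exists w; apply: universal_dominates.
have [u wu] := e_no_isolated w; exists u.
by rewrite -(def_pblock proper_coloring_trivI CP wC) (universal_pblock wU) dominates_set1 e_sym.
Qed.

Lemma universal_td_class (w v : T) : universal w ->
  exists2 C, C \in P & (C != pblock P v) && dominates e v C.
Proof.
move=> wU; have wP := pblock_mem (proper_coloring_cover w).
have [-> | vw] := eqVneq v w; last first.
  exists (pblock P w) => //; rewrite (universal_pblock wU) dominates_set1 e_sym wU // andbT.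
  by apply/eqP => /setP/(_ v); rewrite !inE mem_pblock proper_coloring_cover (negbTE vw).
have [u wu] := e_no_isolated w.
have uw : u != w by apply: contraTneq wu => ->; rewrite e_irr.
have w_notin_u : w \notin pblock P u.
  apply: contraNN uw => w_u; rewrite -in_set1 -(universal_pblock wU).
  rewrite (def_pblock proper_coloring_trivI (pblock_mem (proper_coloring_cover u)) w_u).
  by rewrite mem_pblock proper_coloring_cover.
exists (pblock P u); first exact: pblock_mem (proper_coloring_cover u).
rewrite universal_dominates // andbT (universal_pblock wU).
by apply: contraNneq w_notin_u => ->; rewrite inE.
Qed.

End UniversalVertex.

Section MaxDegree.
Variables (T : finType) (e : rel T).
Hypotheses (e_irr : irreflexive e) (e_sym : symmetric e).
Hypotheses (e_no_isolated : no_isolated e) (e_max_degree : max_degree e = #|T| - 1).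

Lemma dom_coloringE (P : {set {set T}}) : dom_coloring e P = proper_coloring e P.
Proof.
rewrite /dom_coloring; have [P_proper | //] := boolP (proper_coloring e P).
apply/forallP => C; apply/implyP => CP; apply/existsP.
have [x _] := proper_coloring_class_nonempty P_proper CP.
have [w wU] := max_degree_universal e_irr x e_max_degree.
exact: (universal_dom_class e_sym P_proper e_no_isolated wU CP).
Qed.

Lemma td_coloringE (P : {set {set T}}) : td_coloring e P = proper_coloring e P.
Proof.
rewrite /td_coloring; have [P_proper | //] := boolP (proper_coloring e P).
apply/forallP => v; apply/existsP.
have [w wU] := max_degree_universal e_irr v e_max_degree.
have [C CP C_v] := universal_td_class e_irr e_sym P_proper e_no_isolated v wU.
by exists C; rewrite CP.
Qed.

End MaxDegree.

Theorem mainTheorem1 (T : finType) (e : rel T) :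
  simple_graph e -> connected_graph e -> no_isolated e ->
  max_degree e = #|T| - 1 ->
  chi_dom e = chi_td e /\ chi_td e = chromatic_number e.
Proof.
move=> [e_irr e_sym] _ e_no_isolated e_max_degree.
have domE := dom_coloringE e_irr e_sym e_no_isolated e_max_degree.
have tdE := td_coloringE e_irr e_sym e_no_isolated e_max_degree.
by rewrite /chi_dom /chi_td /chromatic_number; split; apply: eq_bigl => P;
  rewrite ?domE ?tdE.
Qed.
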